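(* Let $(F_r)_{r\in\mathbb Z}$ be the Fibonacci numbers and $(\mathcal F_r)_{r\in\mathbb Z}$ any generalized Fibonacci sequence. Then for all integers $r,s$ and every non-negative integer $k$: \[ F_s\sum_{j=0}^kF_{s+1}^{k-j}\mathcal F_{r-1+sj}=\mathcal F_{r+s(k+1)}-F_{s+1}^{k+1}\mathcal F_r, \] \[ \sum_{j=0}^k(-1)^jF_s^{k-j}F_{s+1}^j\mathcal F_{r-k+s+j}=(-1)^kF_{s+1}^{k+1}\mathcal F_r+F_s^{k+1}\mathcal F_{r-k-1}, \] \[ F_s\sum_{j=0}^kF_{s-1}^{k-j}\mathcal F_{r-sk-s+1+sj}=\mathcal F_r-F_{s-1}^{k+1}\mathcal F_{r-(k+1)s}. \]
   Context: A generalized Fibonacci sequence is a two-sided sequence $(\mathcal F_r)_{r\in\mathbb Z}$ of complex numbers with $\mathcal F_r=\mathcal F_{r-1}+\mathcal F_{r-2}$ for all $r\in\mathbb Z$. The Fibonacci numbers $F_r$ are the one with $F_0=0$, $F_1=1$ (extended to negative indices by the recurrence). The convention $0^0=1$ is used. *)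

From HB Require Import structures.
From mathcomp Require Import all_boot all_order all_algebra.
Set Implicit Arguments. Unset Strict Implicit. Unset Printing Implicit Defensive.
Import Order.TTheory GRing.Theory Num.Theory.
Local Open Scope ring_scope.

Definition is_gen_fib (R : comNzRingType) (f : int -> R) : Prop :=
  forall r : int, f r = f (r - 1) + f (r - 2).

Definition is_fib (R : comNzRingType) (F : int -> R) : Prop :=
  is_gen_fib F /\ F 0 = 0 /\ F 1 = 1.

From HB Require Import structures.
From mathcomp Require Import all_boot all_order all_algebra.
From mathcomp Require Import ring zify.
Set Implicit Arguments. Unset Strict Implicit. Unset Printing Implicit Defensive.
Import Order.TTheory GRing.Theory Num.Theory.
Local Open Scope ring_scope.

(* Everything rests on the addition formula G (a + s) = F s * G (a + 1) + F (s - 1) * G a,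
   valid for all integers a and s; it follows by induction on s in both directions, since
   the recurrences of F and G make the step from s to s + 1 reversible.  The addition
   formula turns the j-th summand of each identity into a difference of consecutive terms
   of a sequence x ^ (k + 1 - j) * z ^ j * f j (with z = 1 for the first and third
   identity, and z = - F (s + 1) for the alternating one), so all three sums telescope. *)

Lemma telescope_sumr_homog {R : comPzRingType} (x z : R) (f : nat -> R) (k : nat) :
  \sum_(j < k.+1) x ^+ (k - j) * z ^+ j * (z * f j.+1 - x * f j)
    = z ^+ k.+1 * f k.+1 - x ^+ k.+1 * f 0%N.
Proof.
rewrite -(big_mkord xpredT (fun j => x ^+ (k - j) * z ^+ j * (z * f j.+1 - x * f j))).
rewrite (telescope_sumr_eq (fun j => x ^+ (k.+1 - j) * z ^+ j * f j)) //.
  by rewrite subnn subn0 expr0 mul1r mulr1.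
move=> j /andP[_ ltjk]; rewrite subSS subSn // !exprS; ring.
Qed.

Section GeneralizedFibonacci.
Variables (R : comNzRingType) (F G : int -> R).
Hypotheses (hF : is_fib F) (hG : is_gen_fib G).

Lemma gen_fib_succ {f : int -> R} : is_gen_fib f -> forall a, f (a + 1) = f a + f (a - 1).
Proof. by move=> hf a; rewrite hf; congr (f _ + f _); lia. Qed.

Lemma gen_fib_addition_succ (s : int) :
  (forall a : int, G (a + s) = F s * G (a + 1) + F (s - 1) * G a) <->
  (forall a : int, G (a + (s + 1)) = F (s + 1) * G (a + 1) + F s * G a).
Proof.
have [hFrec _] := hF.
have Fs1 : F (s + 1) = F s + F (s - 1) by exact: gen_fib_succ.
split=> hs a.
- rewrite (_ : a + (s + 1) = (a + 1) + s); last by ring.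
  by rewrite hs (gen_fib_succ hG (a + 1)) addrK Fs1; ring.
- rewrite (_ : a + s = (a - 1) + (s + 1)); last by ring.
  by rewrite hs subrK (gen_fib_succ hG a) Fs1; ring.
Qed.

Lemma gen_fib_addition (a s : int) : G (a + s) = F s * G (a + 1) + F (s - 1) * G a.
Proof.
move: a; elim/int_ind: s => [|n|n].
- have [hFrec [F0 F1]] := hF.
  have Fm1 : F (0 - 1) = 1 by move: (hFrec 1); rewrite F1 F0 add0r.
  by move=> a; rewrite addr0 F0 Fm1 mul0r add0r mul1r.
- by move/gen_fib_addition_succ; rewrite -addn1 PoszD addrK.
- move=> hn; rewrite (_ : - (n.+1)%:Z = - n%:Z - 1); last by rewrite intS; ring.
  by apply/gen_fib_addition_succ; rewrite subrK.
Qed.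

Lemma gen_fib_addition_pred (a s : int) : G (a + s) = F (s + 1) * G a + F s * G (a - 1).
Proof.
rewrite (_ : a + s = (a - 1) + (s + 1)); last by ring.
by rewrite gen_fib_addition subrK addrK; ring.
Qed.

Lemma gen_fib_sum_expFsucc (r s : int) (k : nat) :
  F s * (\sum_(j < k.+1) F (s + 1) ^+ (k - j)%N * G (r - 1 + s * (j : nat)%:Z))
    = G (r + s * (k.+1)%:Z) - F (s + 1) ^+ k.+1 * G r.
Proof.
have := telescope_sumr_homog (F (s + 1)) 1 (fun j : nat => G (r + s * j%:Z)) k.
rewrite expr1n mul1r mulr0 addr0 => <-; rewrite mulr_sumr; apply: eq_bigr => j _.
rewrite (_ : r + s * (j.+1)%:Z = (r + s * j%:Z) + s); last by rewrite intS; ring.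
rewrite (_ : r - 1 + s * j%:Z = (r + s * j%:Z) - 1); last by ring.
by rewrite (gen_fib_addition_pred (r + s * j%:Z) s) expr1n; ring.
Qed.

Lemma gen_fib_sum_expFpred (r s : int) (k : nat) :
  F s * (\sum_(j < k.+1) F (s - 1) ^+ (k - j)%N
                         * G (r - s * k%:Z - s + 1 + s * (j : nat)%:Z))
    = G r - F (s - 1) ^+ k.+1 * G (r - (k.+1)%:Z * s).
Proof.
set b := r - (k.+1)%:Z * s.
have := telescope_sumr_homog (F (s - 1)) 1 (fun j : nat => G (b + s * j%:Z)) k.
rewrite expr1n mul1r mulr0 addr0 (_ : b + s * (k.+1)%:Z = r); last by rewrite /b; ring.
move=> <-; rewrite mulr_sumr; apply: eq_bigr => j _.
rewrite (_ : b + s * (j.+1)%:Z = (b + s * j%:Z) + s); last by rewrite intS; ring.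
rewrite (_ : r - s * k%:Z - s + 1 + s * j%:Z = (b + s * j%:Z) + 1); last first.
  by rewrite /b intS; ring.
by rewrite (gen_fib_addition (b + s * j%:Z) s) expr1n; ring.
Qed.

Lemma gen_fib_altsum_expF (r s : int) (k : nat) :
  \sum_(j < k.+1) (-1) ^+ (j : nat) * F s ^+ (k - j)%N * F (s + 1) ^+ (j : nat)
                  * G (r - k%:Z + s + (j : nat)%:Z)
    = (-1) ^+ k * F (s + 1) ^+ k.+1 * G r + F s ^+ k.+1 * G (r - k%:Z - 1).
Proof.
set x := F s; set y := F (s + 1); set c := r - k%:Z - 1.
have := telescope_sumr_homog x (- y) (fun j : nat => G (c + j%:Z)) k.
rewrite addr0 (_ : c + (k.+1)%:Z = r); last by rewrite /c intS; ring.
move=> tele; rewrite [RHS](_ : _ = - ((- y) ^+ k.+1 * G r - x ^+ k.+1 * G c)); last first.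
  by rewrite [(- y) ^+ _]exprNn !exprS; ring.
rewrite -tele -sumrN; apply: eq_bigr => j _.
rewrite (_ : r - k%:Z + s + j%:Z = (c + (j.+1)%:Z) + s); last by rewrite /c intS; ring.
rewrite gen_fib_addition_pred (_ : c + (j.+1)%:Z - 1 = c + j%:Z); last by rewrite intS; ring.
by rewrite [(- y) ^+ _]exprNn -/x -/y; ring.
Qed.

End GeneralizedFibonacci.

Theorem mainTheorem6 (R : comNzRingType) (F G : int -> R)
  (hF : is_fib F) (hG : is_gen_fib G) (r s : int) (k : nat) :
  [/\ F s * (\sum_(j < k.+1) F (s + 1) ^+ (k - j)%N * G (r - 1 + s * (j : nat)%:Z))
        = G (r + s * (k.+1)%:Z) - F (s + 1) ^+ k.+1 * G r,
      \sum_(j < k.+1) (-1) ^+ (j : nat) * F s ^+ (k - j)%N * F (s + 1) ^+ (j : nat)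
                        * G (r - k%:Z + s + (j : nat)%:Z)
        = (-1) ^+ k * F (s + 1) ^+ k.+1 * G r + F s ^+ k.+1 * G (r - k%:Z - 1)
    & F s * (\sum_(j < k.+1) F (s - 1) ^+ (k - j)%N
                               * G (r - s * k%:Z - s + 1 + s * (j : nat)%:Z))
        = G r - F (s - 1) ^+ k.+1 * G (r - (k.+1)%:Z * s)].
Proof.
split.
- exact: gen_fib_sum_expFsucc.
- exact: gen_fib_altsum_expF.
- exact: gen_fib_sum_expFpred.
Qed.
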